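(* Let $X$ be a finite-dimensional real Hilbert space, let $C$ be a nonempty closed convex subset of $X$, and let $x\in X$. Then there exists a face $F$ of $C$ such that \[ P_C x = P_{\operatorname{aff} F}\, x . \]
   Context: For a nonempty closed convex set $S\subseteq X$, $P_S$ denotes the orthogonal (nearest-point) projector onto $S$. A subset $F$ of a convex set $C$ is a face of $C$ if whenever $x,y\in C$ and the open segment $]x,y[$ meets $F$, then $x,y\in F$ (in particular $C$ is a face of itself). $\operatorname{aff} F$ denotes the affine hull of $F$, i.e. the smallest affine subspace containing $F$ (which is closed since $X$ is finite-dimensional). *)

From HB Require Import structures.
From mathcomp Require Import all_boot all_order all_algebra.
From mathcomp Require Import all_classical all_reals topology normedtype.
Import numFieldNormedType.Exports.
Set Implicit Arguments. Unset Strict Implicit. Unset Printing Implicit Defensive.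
Import Order.TTheory GRing.Theory Num.Theory.
Local Open Scope ring_scope.
Local Open Scope classical_set_scope.

(* The finite-dimensional real Hilbert space X is modelled as 'rV[R]_n
   with the standard Euclidean inner product. *)
Definition dotv (R : realType) (n : nat) (u v : 'rV[R]_n) : R :=
  (u *m v^T) 0 0.

Definition sqdist (R : realType) (n : nat) (u v : 'rV[R]_n) : R :=
  dotv (u - v) (u - v).

Definition convex_set (R : realType) (n : nat) (C : set 'rV[R]_n) : Prop :=
  forall x y t, C x -> C y -> 0 <= t <= 1 -> C ((1 - t) *: x + t *: y).

Definition open_segment (R : realType) (n : nat) (x y : 'rV[R]_n) : set 'rV[R]_n :=
  [set z | exists2 t : R, 0 < t < 1 & z = (1 - t) *: x + t *: y].

Definition is_face (R : realType) (n : nat) (C F : set 'rV[R]_n) : Prop :=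
  F `<=` C /\
  forall x y, C x -> C y -> open_segment x y `&` F !=set0 -> F x /\ F y.

Definition affine_set (R : realType) (n : nat) (A : set 'rV[R]_n) : Prop :=
  forall x y (t : R), A x -> A y -> A ((1 - t) *: x + t *: y).

Definition aff (R : realType) (n : nat) (F : set 'rV[R]_n) : set 'rV[R]_n :=
  [set z | forall A, affine_set A -> F `<=` A -> A z].

Definition nearest (R : realType) (n : nat) (S : set 'rV[R]_n) (x p : 'rV[R]_n) : Prop :=
  S p /\ forall y, S y -> sqdist x p <= sqdist x y.

(* orthogonal (nearest-point) projector onto S (meaningful for S nonempty
   closed convex, where the nearest point exists and is unique) *)
Definition nproj (R : realType) (n : nat) (S : set 'rV[R]_n) (x : 'rV[R]_n) : 'rV[R]_n :=
  xget 0 (nearest S x).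

From HB Require Import structures.
From mathcomp Require Import all_boot all_order all_algebra.
From mathcomp Require Import all_classical all_reals topology normedtype.
From mathcomp Require Import derive ring lra.
Import numFieldNormedType.Exports.
Set Implicit Arguments. Unset Strict Implicit. Unset Printing Implicit Defensive.
Import Order.TTheory GRing.Theory Num.Theory.
Local Open Scope ring_scope.
Local Open Scope classical_set_scope.

(* Let p = P_C x and u = x - p.  By the variational inequality u is an outward
   normal of C at p, so F := {y in C | <u, y - p> = 0} is an (exposed) face of C
   containing p.  Its affine hull lies in the hyperplane {z | <u, z - p> = 0},
   on which Pythagoras gives |x - z|^2 = |x - p|^2 + |z - p|^2; hence p is also
   the unique nearest point of aff F to x. *)

Section Euclidean.
Variables (R : realType) (n : nat).
Implicit Types (u v w a b p x y z : 'rV[R]_n) (S : set 'rV[R]_n).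

Lemma dotvE u v : dotv u v = \sum_j u 0 j * v 0 j.
Proof. by rewrite /dotv !mxE; apply: eq_bigr => j _; rewrite mxE. Qed.

Lemma dotvC u v : dotv u v = dotv v u.
Proof. by rewrite !dotvE; apply: eq_bigr => j _; rewrite mulrC. Qed.

Lemma dotvDl u v w : dotv (u + v) w = dotv u w + dotv v w.
Proof. by rewrite !dotvE -big_split; apply: eq_bigr => j _; rewrite !mxE mulrDl. Qed.

Lemma dotvZl (t : R) u w : dotv (t *: u) w = t * dotv u w.
Proof. by rewrite !dotvE mulr_sumr; apply: eq_bigr => j _; rewrite !mxE mulrA. Qed.

Lemma dotvNl u w : dotv (- u) w = - dotv u w.
Proof. by rewrite !dotvE -sumrN; apply: eq_bigr => j _; rewrite !mxE mulNr. Qed.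

Lemma dotvDr u v w : dotv w (u + v) = dotv w u + dotv w v.
Proof. by rewrite ![dotv w _]dotvC dotvDl. Qed.

Lemma dotvZr (t : R) u w : dotv w (t *: u) = t * dotv w u.
Proof. by rewrite ![dotv w _]dotvC dotvZl. Qed.

Lemma dotvNr u w : dotv w (- u) = - dotv w u.
Proof. by rewrite ![dotv w _]dotvC dotvNl. Qed.

Lemma dotv0r u : dotv u 0 = 0.
Proof. by rewrite dotvE big1 // => j _; rewrite mxE mulr0. Qed.

Lemma dotv_ge0 v : 0 <= dotv v v.
Proof. by rewrite dotvE; apply: sumr_ge0 => j _; rewrite -expr2 sqr_ge0. Qed.

Lemma dotv_eq0 v : dotv v v = 0 -> v = 0.
Proof.
rewrite dotvE => /psumr_eq0P sq0; apply/rowP => j; rewrite mxE.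
have /eqP := sq0 (fun i _ => ltac:(rewrite -expr2; exact: sqr_ge0)) j isT.
by rewrite -expr2 sqrf_eq0 => /eqP.
Qed.

Lemma dotv_sqrB u v :
  dotv (u - v) (u - v) = dotv u u - 2 * dotv u v + dotv v v.
Proof. rewrite !dotvDl !dotvDr !dotvNl !dotvNr (dotvC v u); ring. Qed.

Lemma dotv_convex u a b p (t : R) :
  dotv u ((1 - t) *: a + t *: b - p) = (1 - t) * dotv u (a - p) + t * dotv u (b - p).
Proof.
by rewrite !dotvE !mulr_sumr -big_split /=; apply: eq_bigr => j _; rewrite !mxE; ring.
Qed.

Lemma sqdist_pythagoras x p z :
  dotv (x - p) (z - p) = 0 -> sqdist x z = sqdist x p + sqdist z p.
Proof.
move=> orth; rewrite /sqdist.
have -> : x - z = (x - p) - (z - p) by rewrite opprB addrA subrK.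
by rewrite dotv_sqrB orth mulr0 subr0.
Qed.

Lemma normr_sqr_le_dotv v : `|v| ^+ 2 <= dotv v v.
Proof.
suff [] : 0 <= `|v| /\ `|v| ^+ 2 <= dotv v v by [].
rewrite [`|v|]mx_normrE; apply: (big_ind (fun m => 0 <= m /\ m ^+ 2 <= dotv v v)).
- by rewrite lexx expr0n /= dotv_ge0.
- by move=> a b [a0 a2] [b0 b2]; rewrite maxEle; case: ifP.
- move=> [i j] _ /=; rewrite ord1 normr_ge0; split => //.
  rewrite real_normK ?num_real // dotvE (bigD1 j) //= -expr2 lerDl.
  by apply: sumr_ge0 => k _; rewrite -expr2 sqr_ge0.
Qed.

Lemma normr_le_dotv v : `|v| <= 1 + dotv v v.
Proof. have := normr_sqr_le_dotv v; have := normr_ge0 v; nra. Qed.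

Lemma sqdist_continuous x : continuous (sqdist x).
Proof.
have -> : sqdist x =
    (fun y => \sum_(j <- index_enum 'I_n) (x 0 j - y 0 j) * (x 0 j - y 0 j)).
  by apply: funext => y; rewrite /sqdist dotvE; apply: eq_bigr => j _; rewrite !mxE.
elim: (index_enum _) => [|j s IHs].
  by under eq_fun do rewrite big_nil; exact: cst_continuous.
under eq_fun do rewrite big_cons.
move=> y; have xyj : {for y, continuous (fun y' : 'rV[R]_n => x 0 j - y' 0 j)}.
  by apply: (@continuousB _ _ _ (fun=> x 0 j)); [exact: cst_continuous|exact: coord_continuous].
exact: continuousD (continuousM xyj xyj) (IHs y).
Qed.

(* Minimize sqdist x over the compact set S `&` closed ball(x, 1 + sqdist x c0). *)
Lemma nearest_exists S x : S !=set0 -> closed S -> exists p, nearest S x p.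
Proof.
case=> c0 Sc0 clS; pose r := 1 + sqdist x c0.
have r0 : 0 < r by rewrite /r /sqdist; have := dotv_ge0 (x - c0); lra.
pose K := S `&` [set y | `|x - y| <= r].
have clK : closed K.
  by apply: closedI => //; have := @closed_ball_closed _ _ x r; rewrite closed_ballE.
have bK : bounded_set K.
  rewrite /= /bounded_near; near=> M => y [_ xy_r] /=.
  have -> : y = x - (x - y) by rewrite opprB addrC subrK.
  apply: (le_trans (ler_normB _ _)); apply: (@le_trans _ _ (`|x| + r)).
    by rewrite lerD2l.
  by near: M; exact: nbhs_pinfty_ge (num_real _).
have Kc0 : K c0 by split => //=; exact: normr_le_dotv.
have [p + pmin] := EVT_min_rV (ex_intro _ c0 Kc0) (bounded_closed_compact bK clK)
  (continuous_subspaceT (@sqdist_continuous x)).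
rewrite inE => -[Sp _]; exists p; split => // y Sy.
have [xy_r|r_xy] := lerP `|x - y| r; first by apply: pmin; rewrite inE.
have := pmin c0 (mem_set Kc0); have := normr_sqr_le_dotv (x - y).
have := normr_ge0 (x - y); move: r_xy; rewrite /r /sqdist; nra.
Unshelve. all: by end_near.
Qed.

Lemma nproj_nearest S x : S !=set0 -> closed S -> nearest S x (nproj S x).
Proof. by move=> S0 clS; apply: xgetPex; exact: nearest_exists. Qed.

Lemma nearest_variational S x p y :
  convex_set S -> nearest S x p -> S y -> dotv (x - p) (y - p) <= 0.
Proof.
move=> cvxS [Sp pmin] Sy; set d := dotv (x - p) (y - p).
set e := dotv (y - p) (y - p); have e0 : 0 <= e := dotv_ge0 _.
have step t : 0 <= t <= 1 -> 0 <= t * (t * e - 2 * d).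
  move=> t01; have := pmin _ (cvxS p y t Sp Sy t01); rewrite /sqdist.
  have -> : x - ((1 - t) *: p + t *: y) = (x - p) - t *: (y - p).
    by apply/rowP => j; rewrite !mxE; ring.
  by rewrite (dotv_sqrB (x - p)) !dotvZr dotvZl -/d -/e; nra.
rewrite leNgt; apply/negP => d0.
have de0 : 0 < d + e by lra.
pose t := d / (d + e).
have td : t * (d + e) = d by rewrite /t mulrVK // unitfE gt_eqF.
have t0 : 0 < t by rewrite /t divr_gt0.
have t1 : t <= 1 by rewrite /t ler_pdivrMr // mul1r; lra.
by have := step t ltac:(rewrite (ltW t0) t1); nra.
Qed.

Lemma nproj_orthogonal S x p :
  S p -> (forall z, S z -> dotv (x - p) (z - p) = 0) -> nproj S x = p.
Proof.
move=> Sp orth; have dist_ge z : S z -> sqdist x p <= sqdist x z.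
  by move=> Sz; rewrite (sqdist_pythagoras (orth z Sz)) lerDl dotv_ge0.
apply: xget_unique => // q [Sq qmin].
have := qmin p Sp; rewrite (sqdist_pythagoras (orth q Sq)) => le_sum.
have qp0 : sqdist q p = 0.
  by apply/eqP; rewrite eq_le dotv_ge0 andbT; lra.
by apply/eqP; rewrite -subr_eq0; apply/eqP/dotv_eq0.
Qed.

Lemma supporting_face C u p :
  (forall y, C y -> dotv u (y - p) <= 0) ->
  is_face C [set y | C y /\ dotv u (y - p) = 0].
Proof.
move=> supp; split=> [y [] //|a b Ca Cb [_ [[t /andP[t0 t1] ->] [_]]]].
rewrite dotv_convex => zF; have := supp a Ca; have := supp b Cb.
by split; split => //; nra.
Qed.

Lemma sub_aff S : S `<=` aff S.
Proof. by move=> z Sz A _; apply. Qed.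

Lemma aff_hyperplane S u p :
  S `<=` [set z | dotv u (z - p) = 0] -> aff S `<=` [set z | dotv u (z - p) = 0].
Proof.
move=> SH z affz; apply: affz SH => a b t /= ua ub.
by rewrite dotv_convex ua ub !mulr0 addr0.
Qed.

End Euclidean.

Theorem corollary2p4 (R : realType) (n : nat) (C : set 'rV[R]_n) (x : 'rV[R]_n) :
  C !=set0 -> closed C -> convex_set C ->
  exists F : set 'rV[R]_n,
    is_face C F /\ F !=set0 /\ nproj C x = nproj (aff F) x.
Proof.
move=> C0 clC cvxC; have np := nproj_nearest x C0 clC.
set p := nproj C x in np *.
pose F := [set y | C y /\ dotv (x - p) (y - p) = 0].
have Fp : F p by split; [exact: np.1 | rewrite subrr dotv0r].
exists F; split; first by apply: supporting_face => y; exact: nearest_variational cvxC np.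
split; first by exists p.
have affF_orth : aff F `<=` [set z | dotv (x - p) (z - p) = 0].
  by apply: aff_hyperplane => y [].
by symmetry; apply: nproj_orthogonal (sub_aff Fp) affF_orth.
Qed.
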